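(* Let $S^{ES}$ denote the complexity function of the family of evolutionary stable configurations (in the one-dimensional Riviera model). Then for every $\rho$ with $\frac{3}{5} < \rho < \frac{2}{3}$, $$S^{ES}(\rho) = (2\rho - 1) \ln(2\rho - 1) - (2 - 3\rho) \ln(2 - 3\rho) - (5\rho - 3) \ln(5\rho - 3).$$
   Context: A configuration of length $n\ge 0$ is a binary string $c_1c_2\cdots c_n$; $c_k=1$ means lot $k$ is occupied by a house, $c_k=0$ that it is empty. A house at position $k$ is blocked (from sunlight) if $2\le k\le n-1$ and $c_{k-1}=c_{k+1}=1$; lots beyond the ends of the string never obstruct sunlight. A configuration is permissible if no house is blocked. It is maximal (jammed) if it is permissible and, for every $k$ with $c_k=0$, the string obtained by setting $c_k=1$ is not permissible. A maximal configuration is resistant to predators if, for every $k$ with $c_k=0$, in the string obtained by setting $c_k=1$ the new house at position $k$ is blocked; it is resistant to altruists if, for every $k$ with $c_k=0$, in the string obtained by setting $c_k=1$ some house at a position $l\ne k$ is blocked. An evolutionary stable configuration is a maximal configuration resistant to both predators and altruists. Let $J_{k,n}$ be the number of such configurations of length $n$ with exactly $k$ occupied lots; whenever $J_{k,n}=0$ it is redefined to be $1$. The complexity function is $S(\rho)=\sup \limsup_{i\to\infty} \frac{\ln J_{k_i,n_i}}{n_i}$, where the supremum ranges over all sequences $((k_i,n_i))_i$ of pairs of non-negative integers with $n_i\to\infty$ and $k_i/n_i\to\rho$. *)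

From Stdlib Require Import Reals.
From Coquelicot Require Import Coquelicot.
From mathcomp Require Import all_boot.

Set Implicit Arguments.
Unset Strict Implicit.
Unset Printing Implicit Defensive.
Local Open Scope nat_scope.

(* A configuration of length n is a seq bool c = c_1 ... c_n, stored
   0-indexed: paper position k (1 <= k <= n) is index k-1. *)

Definition blocked (c : seq bool) (k : nat) : bool :=
  [&& nth false c k, 0 < k, k.+1 < size c,
      nth false c k.-1 & nth false c k.+1].

Definition permissible (c : seq bool) : bool :=
  ~~ has (blocked c) (iota 0 (size c)).

Definition occupy (c : seq bool) (k : nat) : seq bool := set_nth false c k true.

Definition maximal (c : seq bool) : bool :=
  permissible c &&
  all (fun k => ~~ nth false c k ==> ~~ permissible (occupy c k))
      (iota 0 (size c)).

Definition resistant_predators (c : seq bool) : bool :=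
  all (fun k => ~~ nth false c k ==> blocked (occupy c k) k)
      (iota 0 (size c)).

Definition resistant_altruists (c : seq bool) : bool :=
  all (fun k => ~~ nth false c k ==>
         has (fun l => (l != k) && blocked (occupy c k) l) (iota 0 (size c)))
      (iota 0 (size c)).

Definition ev_stable (c : seq bool) : bool :=
  [&& maximal c, resistant_predators c & resistant_altruists c].

Definition J0 (k n : nat) : nat :=
  #|[pred c : n.-tuple bool | ev_stable c && (count id c == k)]|.

Definition J (k n : nat) : nat := if J0 k n == 0 then 1 else J0 k n.

Definition admissible_seq (rho : R) (k n : nat -> nat) : Prop :=
  is_lim_seq (fun i => INR (n i)) p_infty /\
  is_lim_seq (fun i => Rdiv (INR (k i)) (INR (n i))) rho.

Definition S_ES (rho : R) : Rbar :=
  Rbar_lub (fun l : Rbar => exists k n : nat -> nat,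
     admissible_seq rho k n /\
     l = LimSup_seq (fun i => Rdiv (ln (INR (J (k i) (n i)))) (INR (n i)))).

(* Evolutionary stability is a local condition: no house has both neighbours occupied, every
   empty lot lies between two houses, and one of these belongs to a pair of adjacent houses.
   After prefixing an empty lot, the nonempty stable configurations are thus the words of
   (011 + 01011)^* (eps + 01); such a word with a blocks 011 and b blocks 01 has length
   3a + 2b and 2a + b houses, and there are C(a + 1, b) of them.  Hence
   J_{k,n} = C(2k - n, 2n + 2 - 3k) when 3n + 2 < 5k and 3k < 2n + 2, and the entropy bounds
   N H(b/N) - ln (N + 1) <= ln C(N, b) <= N H(b/N), obtained from the mode of the binomial
   distribution, show that ln J_{k_i,n_i} / n_i converges to the stated value along every
   admissible sequence. *)

From Stdlib Require Import Reals Lra.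
From Coquelicot Require Import Coquelicot.
From mathcomp Require Import all_boot zify.

Set Implicit Arguments.
Unset Strict Implicit.
Unset Printing Implicit Defensive.

Local Open Scope nat_scope.

(** * Local characterisation of evolutionary stability *)

(* [cell c (k + 2)] is lot [k] of [c]; lots beyond either end of [c] are empty. *)
Definition cell (c : seq bool) (j : nat) : bool := nth false [:: false, false & c] j.

Lemma cell_occupy c k j : cell (occupy c k) j = (j == k.+2) || cell c j.
Proof.
by rewrite /cell; case: j => [|[|j]] //=; rewrite /occupy nth_set_nth /= !eqSS; case: (j == k).
Qed.

Lemma blocked_cell c k : blocked c k = [&& cell c k.+1, cell c k.+2 & cell c k.+3].
Proof.
rewrite /blocked /cell; case: k => [|k] /=; first by rewrite !andbF.
case: (ltnP k.+2 (size c)) => h; last by rewrite (nth_default false h) !andbF.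
by case: (nth false c k); case: (nth false c k.+1).
Qed.

Lemma permissible_cells c :
  permissible c = all (fun k => ~~ [&& cell c k.+1, cell c k.+2 & cell c k.+3]) (iota 0 (size c)).
Proof. by rewrite /permissible -all_predC; apply: eq_all => k /=; rewrite blocked_cell. Qed.

Lemma occupy_blocked_self c k : blocked (occupy c k) k = cell c k.+1 && cell c k.+3.
Proof. by rewrite blocked_cell !cell_occupy eqxx ltn_eqF // gtn_eqF. Qed.

Lemma altruist_cells c k : permissible c -> k < size c ->
  has (fun l => (l != k) && blocked (occupy c k) l) (iota 0 (size c))
  = (cell c k && cell c k.+1) || (cell c k.+3 && cell c k.+4).
Proof.
move=> /hasPn perm hk; apply/hasP/idP => [[l] | ].
  rewrite mem_iota /= => hl /andP [lk]; rewrite blocked_cell !cell_occupy !eqSS.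
  have := perm l; rewrite mem_iota hl blocked_cell => /(_ isT) nb.
  case: (eqVneq l.+1 k) => [<- | l1k] /=.
    by rewrite (@ltn_eqF l l.+2) // (@ltn_eqF l l.+1) // andbT => ->.
  case: (eqVneq l k.+1) => [-> | lk1] /=.
    by rewrite gtn_eqF //= => ->; rewrite orbT.
  by rewrite (negbTE lk) /= (negbTE nb).
case/orP => [/andP [ck ck1] | /andP [ck3 ck4]].
  case: k hk ck ck1 => [|[|j]] // hk ck ck1.
  exists j.+1; first by rewrite mem_iota; lia.
  by rewrite eqSS ltn_eqF //= blocked_cell !cell_occupy !eqSS eqxx ck ck1 !orbT.
have hk2 : k.+2 < size c.
  by move: ck4; rewrite /cell /=; case: ltnP => // h; rewrite nth_default.
exists k.+1; first by rewrite mem_iota; lia.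
by rewrite gtn_eqF //= blocked_cell !cell_occupy eqxx ck3 ck4 !orbT.
Qed.

(* The condition at lot [x], whose neighbours at distance 2, 1, 1, 2 are [a], [b], [e], [f]:
   an occupied lot is not blocked; an empty lot would be blocked once occupied ([b], [e])
   and would then block a neighbour ([a] or [f]). *)
Definition stable_lot (a b x e f : bool) : bool :=
  if x then ~~ (b && e) else [&& b, e & a || f].

Definition stable_at (d : seq bool) (k : nat) : bool :=
  stable_lot (nth false d k) (nth false d k.+1) (nth false d k.+2)
             (nth false d k.+3) (nth false d k.+4).

Definition stable_after (x y : bool) (w : seq bool) : bool :=
  all (stable_at [:: x, y & w]) (iota 0 (size w)).

Lemma stable_after_cons x y z w :
  stable_after x y (z :: w)
  = stable_lot x y z (nth false w 0) (nth false w 1) && stable_after y z w.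
Proof. by rewrite /stable_after /= -[1]/(1 + 0) iotaDl all_map. Qed.

Lemma maximal_of_predators c : resistant_predators c -> maximal c = permissible c.
Proof.
move=> /allP pred; rewrite /maximal; case: permissible => //=.
apply/allP => k hk; apply/implyP => ck; apply/negPn/hasP; exists k.
  by move: hk; rewrite !mem_iota /occupy size_set_nth; lia.
exact: (implyP (pred k hk)).
Qed.

Lemma ev_stable_local c : ev_stable c = stable_after false false c.
Proof.
have -> : stable_after false false c =
  [&& permissible c, resistant_predators c &
      all (fun k => ~~ cell c k.+2 ==> (cell c k && cell c k.+1) || (cell c k.+3 && cell c k.+4))
          (iota 0 (size c))].
  rewrite permissible_cells -!all_predI; apply: eq_all => k /=.
  rewrite occupy_blocked_self -[nth false c k]/(cell c k.+2) /stable_at /stable_lot.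
  rewrite -/(cell c k) -/(cell c k.+1) -/(cell c k.+2) -/(cell c k.+3) -/(cell c k.+4).
  by case: (cell c k); case: (cell c k.+1); case: (cell c k.+2);
     case: (cell c k.+3); case: (cell c k.+4).
rewrite /ev_stable; case: (boolP (resistant_predators c)) => [pred | _]; last by rewrite !andbF.
rewrite maximal_of_predators //=; case: (boolP (permissible c)) => //= perm.
by apply: eq_in_all => k; rewrite mem_iota => /andP [_ hk] /=; rewrite altruist_cells.
Qed.

(** * Counting by tilings *)

(* The language (011 + 01011)^* (eps + 01), writing 0 for false and 1 for true. *)
Fixpoint tiled (w : seq bool) : bool :=
  match w with
  | [::] => true
  | false :: true :: r =>
      match r with
      | [::] => true
      | true :: r' => tiled r'
      | false :: true :: true :: r' => tiled r'
      | _ => false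
      end
  | _ => false
  end.

Lemma stable_after_tiled n c : size c <= n ->
  stable_after false true c = tiled [:: false, true & c] /\
  ~~ nth false c 0 && stable_after true true c = tiled c.
Proof.
elim: n c => [|n IH] [|z r] //= hr; split.
- case: z; rewrite stable_after_cons /=; first exact: (IH r hr).2.
  case: r hr => [|[] [|[] r]] /= hr; rewrite ?stable_after_cons //=.
  by rewrite (IH r _).2 //; lia.
- case: z; rewrite //= stable_after_cons /=.
  case: r hr => [|[] r] /= hr; rewrite ?stable_after_cons //=.
  by rewrite (IH r _).1 //; lia.
Qed.

Lemma ev_stable_tiled c : ev_stable c = (c == [::]) || tiled (false :: c).
Proof.
rewrite ev_stable_local; case: c => [|[] w] //; rewrite stable_after_cons //=.
exact: (stable_after_tiled (leqnn (size w))).1.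
Qed.

Definition short_tile : seq bool := [:: false; true].
Definition long_tile : seq bool := [:: false; true; true].

Fixpoint tilings (a b : nat) : seq (seq bool) :=
  match a with
  | 0 => if b == 0 then [:: [::]] else if b == 1 then [:: short_tile] else [::]
  | a'.+1 => map (cat long_tile) (tilings a' b) ++
             (if b is b'.+1 then map (cat (short_tile ++ long_tile)) (tilings a' b') else [::])
  end.

Lemma size_tilings a b : size (tilings a b) = 'C(a.+1, b).
Proof.
elim: a b => [|a IH] [|b] /=; [by [] | by case: b | | ];
  rewrite size_cat !size_map !IH; first by rewrite !bin0.
by rewrite [in RHS]binS.
Qed.

Lemma uniq_tilings a b : uniq (tilings a b).
Proof.
elim: a b => [|a IH] [|b] //=; first by case: b.
  by rewrite cats0 map_inj_uniq // => s t [].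
rewrite cat_uniq !map_inj_uniq ?IH //=; try by move=> s t [].
by rewrite andbT; apply/hasPn => _ /mapP [w _ ->]; apply/negP => /mapP [w' _] [].
Qed.

Lemma tilings_tiled a b w : w \in tilings a b ->
  [&& tiled w, size w == 3 * a + 2 * b & count id w == 2 * a + b].
Proof.
elim: a b w => [|a IH] b w /=.
  by case: b => [|[|b]] //; rewrite inE => /eqP ->.
rewrite mem_cat => /orP [].
  move=> /mapP [w' /IH /and3P [tw /eqP sw /eqP cw] ->] /=.
  by rewrite tw sw cw; apply/andP; split; apply/eqP; lia.
case: b => [|b] //= /mapP [w' /IH /and3P [tw /eqP sw /eqP cw] ->] /=.
by rewrite tw sw cw; apply/andP; split; apply/eqP; lia.
Qed.

Lemma tiled_in_tilings w : tiled w -> exists a b, w \in tilings a b.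
Proof.
have [n] := ubnP (size w); elim: n w => // n IH [|[] [|[] r]] //= hr.
- by exists 0, 0; rewrite inE.
- case: r hr => [|[] r] /= hr.
  + by exists 0, 1; rewrite inE.
  + move=> tr; have /IH /(_ tr) [a [b h]] : size r < n by lia.
    by exists a.+1, b; rewrite /= mem_cat map_f.
  + case: r hr => [|[] [|[] r]] //= hr.
    move=> tr; have /IH /(_ tr) [a [b h]] : size r < n by lia.
    by exists a.+1, b.+1; rewrite /= mem_cat map_f ?orbT.
Qed.

Lemma mem_tilings a b w : (w \in tilings a b) =
  [&& tiled w, size w == 3 * a + 2 * b & count id w == 2 * a + b].
Proof.
apply/idP/idP => [|/and3P [tw /eqP sw /eqP cw]]; first exact: tilings_tiled.
have [a' [b' h]] := tiled_in_tilings tw.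
have /and3P [_ /eqP sw' /eqP cw'] := tilings_tiled h.
by have [<- <-] : a' = a /\ b' = b by lia.
Qed.

Lemma J0_binomial k n a b : n.+1 = 3 * a + 2 * b -> k = 2 * a + b -> J0 k n = 'C(a.+1, b).
Proof.
move=> hn hk.
have tail_tiling w : w \in tilings a b -> w = false :: behead w /\ size (behead w) = n.
  rewrite mem_tilings => /and3P [+ /eqP]; case: w => [|[] w] //= _ sw; first lia.
  by split => //; lia.
pose s := map behead (tilings a b).
have uniq_s : uniq s.
  rewrite map_inj_in_uniq ?uniq_tilings // => x y /tail_tiling [-> _] /tail_tiling [-> _].
  by move=> /= ->.
have size_s : all (fun x => size x == n) s.
  by apply/allP => _ /mapP [w /tail_tiling [_ sw] ->]; rewrite sw.
have mem_s (t : n.-tuple bool) : (t \in pmap insub s) = ev_stable t && (count id t == k).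
  rewrite mem_pmap_sub ev_stable_tiled.
  have -> : (val t == [::]) = false by rewrite -size_eq0 size_tuple; lia.
  apply/mapP/andP => [[w /[dup] hw /tail_tiling [ew _] ->] | [/orP [// | tt] /eqP ct]].
    by move: hw; rewrite ew mem_tilings => /and3P [-> _]; rewrite /= add0n hk.
  exists (false :: val t) => //.
  by rewrite mem_tilings tt /= size_tuple ct hn hk !eqxx.
rewrite /J0 (eq_card (B := mem (pmap insub s))) => [|t]; last by rewrite inE mem_s.
rewrite (card_uniqP (pmap_sub_uniq _ uniq_s)) size_pmap_sub.
by move: size_s; rewrite all_count => /eqP ->; rewrite size_map size_tilings.
Qed.

Lemma J_binomial k n : 3 * n + 2 < 5 * k -> 3 * k < 2 * n + 2 ->
  J k n = 'C(2 * k - n, 2 * n + 2 - 3 * k).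
Proof.
move=> lo hi; have C_gt0 : 0 < 'C(2 * k - n, 2 * n + 2 - 3 * k) by rewrite bin_gt0; lia.
rewrite /J (@J0_binomial k n (2 * k - n).-1 (2 * n + 2 - 3 * k)) ?prednK; try lia.
by rewrite eqn0Ngt C_gt0.
Qed.

(** * Entropy bounds for binomial coefficients *)

From Coquelicot Require Import Rbar.
Delimit Scope R_scope with R.
Local Open Scope R_scope.

Definition xlnx (y : R) : R := y * ln y.

Definition binomial_entropy (N b : R) : R := xlnx N - xlnx b - xlnx (N - b).

Lemma sum_f_R0_ge_term (f : nat -> R) n j :
  (forall i, 0 <= f i) -> (j <= n)%N -> f j <= sum_f_R0 f n.
Proof.
move=> f_ge0; elim: n => [|n IH]; first by rewrite leqn0 => /eqP ->; apply: Rle_refl.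
rewrite leq_eqVlt => /orP [/eqP -> | /IH]; have := f_ge0 n.+1; rewrite /=.
  by have := cond_pos_sum f n f_ge0; lra.
by lra.
Qed.

Lemma INR_binomial n k : (k <= n)%N -> INR 'C(n, k) = Binomial.C n k.
Proof.
move=> le_kn; have fact_pos m : INR (Factorial.fact m) <> 0.
  by apply: not_0_INR; have := Factorial.lt_O_fact m; lia.
have factE m : m`! = Factorial.fact m by elim: m => // m IH; rewrite factS IH.
have := bin_fact le_kn; rewrite !factE /Binomial.C => /(f_equal INR); rewrite !mult_INR => <-.
by change (Nat.sub n k) with (n - k)%N; field; split.
Qed.

Lemma unimodal_le_mode (f : nat -> R) p n j :
  (forall i, (i < p)%N -> f i <= f i.+1) -> (forall i, (p <= i < n)%N -> f i.+1 <= f i) ->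
  (j <= n)%N -> f j <= f p.
Proof.
move=> f_up f_down le_jn.
have Rle_trans' y u v : u <= y -> y <= v -> u <= v by apply: Rle_trans.
have Rge_trans' y u v : y <= u -> v <= y -> v <= u by move=> ? ?; apply: Rle_trans; eassumption.
case: (leqP j p) => [le_jp | lt_pj].
  have := @homo_leq_in _ [pred i | (i <= p)%N] f Rle Rle_refl Rle_trans'.
  apply=> //; rewrite ?inE //.
    by move=> i k hi hk l /andP [? ?]; rewrite !inE in hi hk *; lia.
  by move=> i _; rewrite inE => /f_up.
have := @homo_leq_in _ [pred i | (p <= i <= n)%N] f (fun u v => v <= u) Rle_refl Rge_trans'.
apply; rewrite ?inE ?leqnn ?le_jn ?(ltnW lt_pj) //=; last by lia.
  by move=> i k hi hk l /andP [? ?]; rewrite !inE in hi hk *; lia.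
by move=> i; rewrite !inE => /andP [? _] /andP [_ ?]; apply: f_down; lia.
Qed.

Section BinomialMode.
Variables N b : nat.
Hypothesis b_range : (0 < b < N)%N.

Let x := INR b / INR N.
(* The binomial distribution with parameters N and b / N, whose mode is at b. *)
Let t j := Binomial.C N j * x ^ j * (1 - x) ^ (N - j).

Let N_gt0 : 0 < INR N.  Proof. by apply: lt_0_INR; lia. Qed.
Let b_gt0 : 0 < INR b.  Proof. by apply: lt_0_INR; lia. Qed.
Let b_lt_N : INR b < INR N.  Proof. by apply: lt_INR; lia. Qed.
Let Nb_INR : INR (N - b) = INR N - INR b.  Proof. by rewrite minus_INR //; lia. Qed.

Let x_range : 0 < x < 1.
Proof.
rewrite /x; split; first exact: Rdiv_lt_0_compat.
by apply/Rlt_div_l => //; lra.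
Qed.

Let C_gt0 j : 0 < Binomial.C N j.
Proof.
apply: Rdiv_lt_0_compat; [|apply: Rmult_lt_0_compat];
  by apply: lt_0_INR; apply: Factorial.lt_O_fact.
Qed.

Let t_ge0 j : 0 <= t j.
Proof.
have [x0 x1] := x_range; have := C_gt0 j.
by move=> C0; apply: Rmult_le_pos; [apply: Rmult_le_pos|]; try apply: pow_le; lra.
Qed.

Let t_sum : sum_f_R0 t N = 1.
Proof. by rewrite /t -Binomial.binomial Rplus_minus pow1. Qed.

Let t_ratio j : (j < N)%N -> t j.+1 * (INR j.+1 * INR (N - b)) = t j * (INR (N - j) * INR b).
Proof.
move=> lt_jN; rewrite /t pascal_step3; last by lia.
change (Nat.sub N j) with (N - j)%N.
have -> : (N - j = (N - j.+1).+1)%N by lia.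
have -> : 1 - x = INR (N - b) / INR N by rewrite Nb_INR /x; field; lra.
have : INR j.+1 <> 0 by apply: not_0_INR.
by rewrite -!tech_pow_Rmult /x => ?; field; lra.
Qed.

Let t_le_mode j : (j <= N)%N -> t j <= t b.
Proof.
have ratio_up u v A B : v * B = u * A -> 0 <= u -> 0 < B -> B <= A -> u <= v.
  by move=> *; nra.
have ratio_down u v A B : v * B = u * A -> 0 <= u -> 0 < B -> A <= B -> v <= u.
  by move=> *; nra.
have N0 := N_gt0; have b0 := b_gt0; have bN := b_lt_N.
move=> le_jN; apply: (unimodal_le_mode _ _ le_jN) => i.
  move=> lt_ib; have /t_ratio : (i < N)%N by lia.
  have : INR i.+1 <= INR b by apply: le_INR; lia.
  rewrite S_INR !minus_INR; try lia.
  have := pos_INR i => *; apply: ratio_up; [eassumption | exact: t_ge0 | nra | nra].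
move=> /andP [le_bi lt_iN]; move: (t_ratio lt_iN); rewrite S_INR !minus_INR; try lia.
have : INR b <= INR i by apply: le_INR; lia.
have : INR b + 1 <= INR N by rewrite -S_INR; apply: le_INR; lia.
have := pos_INR i => *; apply: ratio_down; [eassumption | exact: t_ge0 | nra | nra].
Qed.

Lemma ln_binomial_bounds :
  binomial_entropy (INR N) (INR b) - ln (INR N + 1) <= ln (Binomial.C N b)
  <= binomial_entropy (INR N) (INR b).
Proof.
have [x0 x1] := x_range; have N0 := N_gt0; have b0 := b_gt0; have bN := b_lt_N.
have t_pos : 0 < t b.
  rewrite /t; apply: Rmult_lt_0_compat; [apply: Rmult_lt_0_compat|]; try apply: pow_lt; try lra.
  exact: C_gt0.
have N1 : 0 < INR N.+1 by apply: lt_0_INR; lia.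
have mode_lb : / INR N.+1 <= t b.
  have : 1 <= t b * INR N.+1.
    by rewrite -t_sum -sum_cte; apply: sum_Rle => j /leP; apply: t_le_mode.
  by rewrite -(Rmult_1_l (/ _)) -/(Rdiv 1 _) => /Rle_div_l; apply.
have mode_ub : t b <= 1 by rewrite -t_sum; apply: sum_f_R0_ge_term => //; lia.
have ln_t : ln (t b) = ln (Binomial.C N b) - binomial_entropy (INR N) (INR b).
  rewrite /t; move: (Binomial.C N b) (C_gt0 b) => C C0.
  have xb0 : 0 < x ^ b by apply: pow_lt.
  have yb0 : 0 < (1 - x) ^ (N - b) by apply: pow_lt; lra.
  rewrite !ln_mult ?ln_pow; try nra.
  have -> : 1 - x = (INR N - INR b) / INR N by rewrite /x; field; lra.
  rewrite /x !ln_div ?Nb_INR /binomial_entropy /xlnx; try lra; ring.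
have := ln_le _ _ (Rinv_0_lt_compat _ N1) mode_lb; have := ln_le _ _ t_pos mode_ub.
by rewrite ln_1 ln_Rinv // S_INR ln_t; lra.
Qed.

End BinomialMode.

(** * Asymptotics *)

Lemma ln_J_bounds k n : 0 < 2 * INR n + 2 - 3 * INR k < 2 * INR k - INR n ->
  binomial_entropy (2 * INR k - INR n) (2 * INR n + 2 - 3 * INR k) - ln (2 * INR n)
  <= ln (INR (J k n))
  <= binomial_entropy (2 * INR k - INR n) (2 * INR n + 2 - 3 * INR k).
Proof.
move=> [b_gt0 b_lt_N].
have lo : (3 * n + 2 < 5 * k)%N.
  by apply/ltP/INR_lt; rewrite -!plusE -!multE ?mult_INR ?plus_INR /=; lra.
have hi : (3 * k < 2 * n + 2)%N.
  by apply/ltP/INR_lt; rewrite -!plusE -!multE ?mult_INR ?plus_INR /=; lra.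
have N_INR : INR (2 * k - n) = 2 * INR k - INR n.
  by rewrite -minusE -multE minus_INR ?mult_INR /=; [lra | lia].
have b_INR : INR (2 * n + 2 - 3 * k) = 2 * INR n + 2 - 3 * INR k.
  by rewrite -minusE -!plusE -!multE minus_INR ?plus_INR ?mult_INR /=; [lra | lia].
have N1_le : INR (2 * k - n) + 1 <= 2 * INR n.
  rewrite -S_INR; have := le_INR (2 * k - n).+1 (2 * n) ltac:(lia).
  by rewrite -multE mult_INR /=; lra.
rewrite J_binomial // INR_binomial; last by lia.
have [lb ub] := @ln_binomial_bounds (2 * k - n) (2 * n + 2 - 3 * k) ltac:(lia).
rewrite N_INR b_INR in lb ub N1_le; split => //.
have : 0 < 2 * INR k - INR n + 1 by lra.
by move/ln_le/(_ N1_le); lra.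
Qed.

Lemma binomial_entropy_div N b n : 0 < b < N -> 0 < n ->
  binomial_entropy N b / n = binomial_entropy (N / n) (b / n).
Proof.
move=> [b0 bN] n0; rewrite /binomial_entropy /xlnx.
have -> : N / n - b / n = (N - b) / n by field; lra.
rewrite !ln_div; try lra; field; lra.
Qed.

Lemma is_lim_seq_xlnx (u : nat -> R) l : 0 < l -> is_lim_seq u l ->
  is_lim_seq (fun i => xlnx (u i)) (xlnx l).
Proof.
move=> l0; apply: is_lim_seq_continuous; apply: continuity_pt_mult.
  exact: continuity_pt_id.
by apply/continuity_pt_filterlim; apply: continuous_ln.
Qed.

Lemma is_lim_seq_binomial_entropy (u v : nat -> R) U V : 0 < V < U ->
  is_lim_seq u U -> is_lim_seq v V ->
  is_lim_seq (fun i => binomial_entropy (u i) (v i)) (binomial_entropy U V).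
Proof.
move=> [V0 VU] lim_u lim_v.
have lim_uv : is_lim_seq (fun i => u i - v i) (U - V) by apply: is_lim_seq_minus'.
apply: is_lim_seq_minus'; first apply: is_lim_seq_minus'.
all: by apply: is_lim_seq_xlnx; try lra.
Qed.

Lemma is_lim_seq_eventually_gt (u : nat -> R) (l a : R) : is_lim_seq u l -> a < l ->
  eventually (fun i => a < u i).
Proof.
move=> /is_lim_seq_spec lim_u al; have al' : 0 < l - a by lra.
by move: (lim_u (mkposreal _ al')); apply: filter_imp => i /Rabs_def2 /=; lra.
Qed.

Lemma is_lim_seq_ln_div (n : nat -> nat) : is_lim_seq (fun i => INR (n i)) p_infty ->
  is_lim_seq (fun i => ln (2 * INR (n i)) / INR (n i)) 0.
Proof.
move=> n_oo.
have two_n_oo : is_lim_seq (fun i => 2 * INR (n i)) p_infty.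
  by apply: (is_lim_seq_le_p_loc _ _ _ n_oo); exists 0%N => i _; have := pos_INR (n i); lra.
have lim_ln : is_lim_seq (fun i => ln (2 * INR (n i)) / (2 * INR (n i))) 0.
  by apply: (is_lim_comp_seq _ _ _ _ is_lim_div_ln_p _ two_n_oo); exists 0%N.
have := is_lim_seq_scal_l _ 2 _ lim_ln; rewrite /= Rmult_0_r; apply: is_lim_seq_ext_loc.
move/is_lim_seq_spec: n_oo => /(_ 0); apply: filter_imp => i n0; field; lra.
Qed.

Lemma is_lim_seq_ln_J rho (k n : nat -> nat) : 3 / 5 < rho -> rho < 2 / 3 ->
  admissible_seq rho k n ->
  is_lim_seq (fun i => ln (INR (J (k i) (n i))) / INR (n i))
             (binomial_entropy (2 * rho - 1) (2 - 3 * rho)).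
Proof.
move=> lo hi [n_oo kn_rho].
pose u i := (2 * INR (k i) - INR (n i)) / INR (n i).
pose v i := (2 * INR (n i) + 2 - 3 * INR (k i)) / INR (n i).
have n_pos : eventually (fun i => 0 < INR (n i)) by move/is_lim_seq_spec: n_oo; apply.
have lim_u : is_lim_seq u (2 * rho - 1).
  apply: (is_lim_seq_ext_loc (fun i => 2 * (INR (k i) / INR (n i)) - 1)).
    by move: n_pos; apply: filter_imp => i n0; rewrite /u; field; lra.
  by apply: is_lim_seq_minus'; [apply: (is_lim_seq_scal_l _ 2 rho) | apply: is_lim_seq_const].
have lim_v : is_lim_seq v (2 - 3 * rho).
  apply: (is_lim_seq_ext_loc (fun i => 2 + 2 * / INR (n i) - 3 * (INR (k i) / INR (n i)))).
    by move: n_pos; apply: filter_imp => i n0; rewrite /v; field; lra.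
  have -> : 2 - 3 * rho = 2 + 2 * 0 - 3 * rho by ring.
  apply: is_lim_seq_minus'; last exact: (is_lim_seq_scal_l _ 3 rho).
  apply: is_lim_seq_plus'; first exact: is_lim_seq_const.
  exact: (is_lim_seq_scal_l _ 2 0 (is_lim_seq_inv _ _ n_oo ltac:(discriminate))).
have lim_G :=
  @is_lim_seq_binomial_entropy u v (2 * rho - 1) (2 - 3 * rho) ltac:(lra) lim_u lim_v.
have lim_lower := is_lim_seq_minus' _ _ _ _ lim_G (is_lim_seq_ln_div n_oo).
rewrite Rminus_0_r in lim_lower.
apply: (is_lim_seq_le_le_loc _ _ _ _ _ lim_lower lim_G).
have v_pos := is_lim_seq_eventually_gt lim_v (ltac:(lra) : 0 < 2 - 3 * rho).
have v_lt_u := is_lim_seq_eventually_gt (is_lim_seq_minus' _ _ _ _ lim_u lim_v)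
  (ltac:(lra) : 0 < 2 * rho - 1 - (2 - 3 * rho)).
apply: filter_imp (filter_and _ _ n_pos (filter_and _ _ v_pos v_lt_u)) => i [n0 [v0 uv]].
have b_range : 0 < 2 * INR (n i) + 2 - 3 * INR (k i) < 2 * INR (k i) - INR (n i).
  have -> : 2 * INR (k i) - INR (n i) = u i * INR (n i) by rewrite /u; field; lra.
  have -> : 2 * INR (n i) + 2 - 3 * INR (k i) = v i * INR (n i) by rewrite /v; field; lra.
  by split; nra.
have inv_n : 0 <= / INR (n i) by left; apply: Rinv_0_lt_compat.
rewrite /u /v -binomial_entropy_div // /Rdiv -Rmult_minus_distr_r.
by have [lb ub] := ln_J_bounds b_range; split; apply: Rmult_le_compat_r.
Qed.

Lemma admissible_seq_exists rho : 0 <= rho -> exists k n, admissible_seq rho k n.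
Proof.
move=> rho0; have rho_i i : 0 <= rho * INR i by have := pos_INR i; nra.
exists (fun i => proj1_sig (nfloor_ex _ (rho_i i))), id; split; first exact: is_lim_seq_INR.
have inv_i : is_lim_seq (fun i => / INR i) 0 by apply: (is_lim_seq_inv _ _ is_lim_seq_INR).
have := is_lim_seq_minus' _ _ _ _ (is_lim_seq_const rho) inv_i.
rewrite Rminus_0_r => lim_lower.
apply: (is_lim_seq_le_le_loc _ _ _ _ _ lim_lower (is_lim_seq_const rho)).
exists 1%N => i i1; case: nfloor_ex => m /= [m_le m_gt].
have i0 : 0 < INR i by apply: lt_0_INR; lia.
have ii : INR i * / INR i = 1 by field; lra.
have := Rinv_0_lt_compat _ i0; rewrite /Rdiv; split; nra.
Qed.

Theorem mainTheorem3 (rho : R) :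
  (3 / 5 < rho)%R -> (rho < 2 / 3)%R ->
  S_ES rho =
  Finite ((2 * rho - 1) * ln (2 * rho - 1)
          - (2 - 3 * rho) * ln (2 - 3 * rho)
          - (5 * rho - 3) * ln (5 * rho - 3))%R.
Proof.
move=> lo hi.
have -> : (2 * rho - 1) * ln (2 * rho - 1) - (2 - 3 * rho) * ln (2 - 3 * rho)
          - (5 * rho - 3) * ln (5 * rho - 3) = binomial_entropy (2 * rho - 1) (2 - 3 * rho).
  by rewrite /binomial_entropy /xlnx; have -> : 2 * rho - 1 - (2 - 3 * rho) = 5 * rho - 3 by ring.
have limsup_eq k n : admissible_seq rho k n ->
    LimSup_seq (fun i => ln (INR (J (k i) (n i))) / INR (n i))
    = binomial_entropy (2 * rho - 1) (2 - 3 * rho).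
  by move=> adm; apply/is_LimSup_seq_unique/is_lim_LimSup_seq/is_lim_seq_ln_J.
apply: Rbar_is_lub_unique; split.
  by move=> _ [k [n [adm ->]]]; rewrite limsup_eq //; apply: Rbar_le_refl.
move=> l ub; have [k [n adm]] := admissible_seq_exists (ltac:(lra) : 0 <= rho).
by apply: ub; exists k, n; rewrite limsup_eq.
Qed.
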